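(* Let $(X,x)$ be a pointed diffeological space and let $\mathcal{C}$ be a local generating category of curves of $X$ at $x$. Then the natural map $\operatorname{colim}(\mathcal{C} \hookrightarrow \mathcal{G}(X,x) \to \mathrm{Vect}) \to T_x(X)$ is an epimorphism.
   Context: A diffeological space is a set $X$ together with, for every open subset $U$ of every $\mathbb{R}^n$, a set of functions $U\to X$ called plots, such that constant maps are plots, the composite of a plot with a smooth map $V\to U$ between open subsets of Euclidean spaces is a plot, and a function which is locally a plot is a plot; smooth maps send plots to plots. For a pointed diffeological space $(X,x)$, let $\mathcal{G}(X,x)$ be the category whose objects are plots $p:U\to X$ with $U$ a connected open neighbourhood of $0$ in some $\mathbb{R}^n$ and $p(0)=x$, and whose morphisms $p\to q$ (with $q:V\to X$) are germs at $0$ of smooth maps $f:W\to V$, $W$ an open neighbourhood of $0$ in $U$, with $f(0)=0$ and $p|_W=q\circ f$. The functor $\mathcal{G}(X,x)\to\mathrm{Vect}$ sends $p:U\to X$ to $T_0(U)$ and $[f]$ to $f_*:T_0(U)\to T_0(V)$; its colimit is the internal tangent space $T_x(X)$. A local generating set of curves of $X$ at $x$ is a set $C$ of objects of $\mathcal{G}(X,x)$ with domain $\mathbb{R}$ such that for each object $p:\mathbb{R}\to X$ of $\mathcal{G}(X,x)$ there exist $q\in C$ and a morphism $p\to q$ in $\mathcal{G}(X,x)$. A local generating category of curves of $X$ at $x$ is a subcategory $\mathcal{C}$ of $\mathcal{G}(X,x)$ whose object set is a local generating set of curves. *)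

From HB Require Import structures.
From mathcomp Require Import all_boot all_order all_algebra.
From mathcomp Require Import all_classical all_reals all_analysis.
Set Implicit Arguments. Unset Strict Implicit. Unset Printing Implicit Defensive.
Import Order.TTheory GRing.Theory Num.Theory.
Import numFieldNormedType.Exports.
Local Open Scope classical_set_scope.
Local Open Scope ring_scope.

Fixpoint iderive (R : realType) (V W : normedModType R) (vs : seq V) (f : V -> W)
  : V -> W :=
  match vs with
  | [::] => f
  | v :: vs' => fun a => derive (iderive vs' f) a v
  end.

Definition smooth_on (R : realType) (V W : normedModType R) (U : set V) (f : V -> W) :=
  forall vs : seq V,
    (forall a, U a -> forall v, derivable (iderive vs f) a v) /\
    (forall a, U a -> {for a, continuous (iderive vs f)}).

(* A diffeology on X.  Plots with domain an open U of R^n are represented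
   by total functions 'rV_n -> X of which only the restriction to U matters. *)
Record diffeology (R : realType) (X : Type) := Diffeology {
  plot : forall n : nat, set 'rV[R]_n -> ('rV[R]_n -> X) -> Prop;
  plot_open : forall n U p, @plot n U p -> open U;
  plot_ext : forall n U (p q : 'rV[R]_n -> X),
      @plot n U p -> (forall u, U u -> p u = q u) -> @plot n U q;
  plot_const : forall n (U : set 'rV[R]_n) (x : X), open U -> plot U (fun _ => x);
  plot_comp : forall n m (U : set 'rV[R]_n) (V : set 'rV[R]_m) p g,
      plot U p -> open V -> smooth_on V g -> g @` V `<=` U -> plot V (p \o g);
  plot_local : forall n (U : set 'rV[R]_n) p, open U ->
      (forall u, U u -> exists V : set 'rV[R]_n,
          [/\ open V, V u, V `<=` U & plot V p]) -> plot U p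
}.

Record pobj (R : realType) (X : Type) := PObj {
  odim : nat;
  odom : set 'rV[R]_odim;
  oplot : 'rV[R]_odim -> X
}.
Arguments odom {R X} p _.
Arguments oplot {R X} p _.
Arguments odim {R X} p.

Section GermCat.
Variables (R : realType) (X : Type) (D : diffeology R X) (x : X).

Definition Gob (p : pobj R X) : Prop :=
  [/\ plot D (odom p) (oplot p), open (odom p), connected (odom p),
      odom p 0 & oplot p 0 = x].

(* A representative (W, f) of a morphism p -> q in G(X,x). *)
Definition Gmor (p q : pobj R X) (W : set 'rV[R]_(odim p))
    (f : 'rV[R]_(odim p) -> 'rV[R]_(odim q)) : Prop :=
  open W /\ W 0 /\ W `<=` odom p /\ smooth_on W f /\
  f @` W `<=` odom q /\ f 0 = 0 /\
  (forall w, W w -> oplot p w = oplot q (f w)).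
Arguments Gmor : clear implicits.

Definition germ_eq (n m : nat) (W : set 'rV[R]_n) (f : 'rV[R]_n -> 'rV[R]_m)
    (W' : set 'rV[R]_n) (f' : 'rV[R]_n -> 'rV[R]_m) : Prop :=
  exists N : set 'rV[R]_n, [/\ open N, N 0, N `<=` W `&` W' &
      forall w, N w -> f w = f' w].
Arguments germ_eq : clear implicits.
Arguments germ_eq {n m}.

Definition tmap (n m : nat) (f : 'rV[R]_n -> 'rV[R]_m) (v : 'rV[R]_n) : 'rV[R]_m :=
  derive f 0 v.

Definition subcategory (Cob : pobj R X -> Prop)
    (Cmor : forall p q : pobj R X, set 'rV[R]_(odim p) ->
              ('rV[R]_(odim p) -> 'rV[R]_(odim q)) -> Prop) : Prop :=
  [/\ (forall p, Cob p -> Gob p),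
      (forall p q W f, Cmor p q W f -> [/\ Cob p, Cob q & Gmor p q W f]),
      (forall p q W f W' f', Cmor p q W f -> Gmor p q W' f' ->
          germ_eq W f W' f' -> Cmor p q W' f'),
      (forall p, Cob p -> Cmor p p (odom p) id) &
      (forall p q r W f W' g, Cmor p q W f -> Cmor q r W' g ->
          Cmor p r (W `&` f @^-1` W') (g \o f))].

Definition is_curve (p : pobj R X) : Prop := odim p = 1%N /\ odom p = setT.

Definition local_generating_set (Cob : pobj R X -> Prop) : Prop :=
  (forall q, Cob q -> Gob q /\ is_curve q) /\
  (forall p, Gob p -> is_curve p ->
     exists q W f, Cob q /\ Gmor p q W f).

Definition local_generating_category (Cob : pobj R X -> Prop)
    (Cmor : forall p q : pobj R X, set 'rV[R]_(odim p) ->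
              ('rV[R]_(odim p) -> 'rV[R]_(odim q)) -> Prop) : Prop :=
  subcategory Cob Cmor /\ local_generating_set Cob.

Definition is_lin (n : nat) (W : lmodType R) (h : 'rV[R]_n -> W) : Prop :=
  forall (a : R) u v, h (a *: u + v) = a *: h u + h v.

(* A cocone with vertex W over the diagram (Dob, Dmor) of the functor
   p |-> T_0(dom p), [f] |-> f_*. *)
Definition cocone (W : lmodType R) (Dob : pobj R X -> Prop)
    (Dmor : forall p q : pobj R X, set 'rV[R]_(odim p) ->
              ('rV[R]_(odim p) -> 'rV[R]_(odim q)) -> Prop)
    (alpha : forall p : pobj R X, 'rV[R]_(odim p) -> W) : Prop :=
  (forall p, Dob p -> is_lin (alpha p)) /\
  (forall p q Wd f, Dob p -> Dob q -> Dmor p q Wd f ->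
     forall v, alpha q (tmap f v) = alpha p v).

End GermCat.
Arguments Gmor {R X} p q W f.
Arguments Gob {R X} D x p.

(* Every vector w of T_0(U) near 0 is the velocity at 0 of the curve
   t |-> sin t *: w, which is smooth on all of R and stays in the ball of radius
   |w| around 0, hence inside U.  Its composite with the plot p is a curve object
   q of G(X,x) with a morphism q -> p sending the unit vector to w; since C
   generates curves, q maps further to an object of C, where the two cocones
   agree.  Linearity extends the agreement from small vectors to all of T_0(U). *)
From HB Require Import structures.
From mathcomp Require Import all_boot all_order all_algebra.
From mathcomp Require Import all_classical all_reals all_analysis.
Import Order.TTheory GRing.Theory Num.Theory.
Import numFieldNormedType.Exports.
Local Open Scope classical_set_scope.
Local Open Scope ring_scope.

Section Sinusoid.
Local Set Implicit Arguments. Local Unset Strict Implicit.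
Variable R : realType.

Lemma is_derive_sin_affine (s m c : R) :
  is_derive (0 : R) 1 (fun h : R => s * sin (h * m + c)) (s * (cos c * m)).
Proof.
have affine : is_derive (0 : R) 1 (fun h : R => h * m + c) m.
  have := is_deriveD (is_deriveZ m (@is_derive_id R R 0 1))
                     (@is_derive_cst R R R c 0 1).
  rewrite addr0 /GRing.scale /= mulr1.
  by congr is_derive; apply/funext => h /=; rewrite mulrC.
have outer : is_derive (0 * m + c) 1 (fun t : R => s * sin t) (s * cos c).
  by rewrite mul0r add0r; exact: is_deriveZ.
have := @is_derive1_comp R (fun t => s * sin t) (fun h => h * m + c) 0 _ _
  outer affine.
by rewrite mulrA.
Qed.

Lemma derive_along_line (V W : normedModType R) (f : V -> W) (g : R -> W) a v :
  (forall h, f (h *: v + a) = g h) ->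
  derive f a v = derive g 0 1 /\ (derivable f a v <-> derivable g 0 1).
Proof.
move=> fg; rewrite /derive /derivable.
suff -> : (fun h : R => h^-1 *: ((f \o shift a) (h *: v) - f a)) =
          (fun h : R => h^-1 *: ((g \o shift 0) (h *: 1) - g 0)) by [].
have fag0 : f a = g 0 by rewrite -fg scale0r add0r.
by apply/funext => h /=; rewrite fg fag0 addr0 [_%:A]mulr1.
Qed.

(* The phase and amplitude parameters make the family closed under directional
   derivatives, which gives smoothness by induction on the list of directions. *)
Definition sinusoid n (w : 'rV[R]_n) (s c : R) : 'rV[R]_1 -> 'rV[R]_n :=
  fun a => (s * sin (a 0 0 + c)) *: w.

Lemma sinusoid_derive n (w : 'rV[R]_n) (s c : R) (a u : 'rV[R]_1) :
  derivable (sinusoid w s c) a u /\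
  derive (sinusoid w s c) a u = sinusoid w (s * u 0 0) (c + pi / 2) a.
Proof.
pose g h := (s * sin (h * u 0 0 + (a 0 0 + c))) *: w.
have [-> derivable_g] : derive (sinusoid w s c) a u = derive g 0 1 /\
    (derivable (sinusoid w s c) a u <-> derivable g 0 1).
  by apply: derive_along_line => h; rewrite /sinusoid /g !mxE addrA.
have dsin := is_derive_sin_affine s (u 0 0) (a 0 0 + c).
have dg : differentiable g 0.
  by apply/differentiableZl/derivable1_diffP; exact: ex_derive.
split; first by apply/derivable_g; exact: diff_derivable.
rewrite deriveE // diffZl; last by apply/derivable1_diffP; exact: ex_derive.
rewrite -deriveE; last by apply/derivable1_diffP; exact: ex_derive.
by rewrite derive_val /sinusoid addrA sinDpihalf mulrA mulrAC.
Qed.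

Lemma sinusoid_continuous n (w : 'rV[R]_n) (s c : R) (a : 'rV[R]_1) :
  {for a, continuous (sinusoid w s c)}.
Proof.
apply: continuousZr_tmp.
have inner : {for a, continuous (fun b : 'rV[R]_1 => b 0 0 + c)}.
  apply: continuousD; last exact: cst_continuous.
  exact/differentiable_continuous/differentiable_coord.
have outer : {for a 0 0 + c, continuous (fun t : R => s * sin t)}.
  apply/differentiable_continuous/derivable1_diffP.
  exact: (@ex_derive _ _ _ _ _ _ _
            (@is_deriveZ R R R (@sin R) s (a 0 0 + c) 1 _ (is_derive_sin _))).
exact: continuous_comp inner outer.
Qed.

Lemma iderive_sinusoid n (w : 'rV[R]_n) (vs : seq 'rV[R]_1) (s c : R) :
  exists s' c', iderive vs (sinusoid w s c) = sinusoid w s' c'.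
Proof.
elim: vs => [|v vs [s' [c' IH]]]; first by exists s, c.
exists (s' * v 0 0), (c' + pi / 2); apply/funext => a /=.
by rewrite IH; case: (sinusoid_derive w s' c' a v).
Qed.

Lemma sinusoid_smooth n (w : 'rV[R]_n) (s c : R) (U : set 'rV[R]_1) :
  smooth_on U (sinusoid w s c).
Proof.
move=> vs; have [s' [c' ->]] := iderive_sinusoid w vs s c.
split=> a _; last exact: sinusoid_continuous.
by move=> v; case: (sinusoid_derive w s' c' a v).
Qed.

Lemma sinusoid_norm n (w : 'rV[R]_n) (a : 'rV[R]_1) :
  `|sinusoid w 1 0 a| <= `|w|.
Proof. by rewrite /sinusoid normrZ mul1r ler_piMl // sin_max. Qed.

Lemma sinusoid0 n (w : 'rV[R]_n) : sinusoid w 1 0 0 = 0.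
Proof. by rewrite /sinusoid mxE addr0 sin0 mulr0 scale0r. Qed.

Lemma tmap_sinusoid n (w : 'rV[R]_n) : tmap (sinusoid w 1 0) (const_mx 1) = w.
Proof.
rewrite /tmap; case: (sinusoid_derive w 1 0 0 (const_mx 1)) => _ ->.
by rewrite /sinusoid !mxE !mul1r add0r sinDpihalf cos0 scale1r.
Qed.

End Sinusoid.

Lemma connected_rV1 (R : realType) : connected [set: 'rV[R]_1].
Proof.
have -> : [set: 'rV[R]_1] = (fun t : R => t *: const_mx 1) @` setT.
  apply/seteqP; split=> // a _; exists (a 0 0) => //.
  by apply/matrixP => i j; rewrite !ord1 !mxE mulr1.
apply: connected_continuous_connected.
  by apply/connected_intervalP => y z _ _ t _.
by apply: continuous_subspaceT => t; exact: scalel_continuous.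
Qed.

Lemma is_lin_scale {R : realType} {n} {W : lmodType R} {h : 'rV[R]_n -> W} :
  is_lin h -> forall (a : R) u, h (a *: u) = a *: h u.
Proof.
move=> lin_h a u.
have h0 : h 0 = 0.
  by apply: (addrI (h 0)); rewrite addr0 -{1}(scale1r (h 0)) -lin_h scale1r addr0.
by have := lin_h a u 0; rewrite !addr0 h0 addr0.
Qed.

Lemma is_lin_eq_near0 {R : realType} {n} {W : lmodType R} {h k : 'rV[R]_n -> W}
    {r : R} :
  is_lin h -> is_lin k -> 0 < r -> (forall w, `|w| < r -> h w = k w) -> h =1 k.
Proof.
move=> lin_h lin_k r0 hk v; have [->|v0] := eqVneq v 0.
  by apply: hk; rewrite normr0.
set c := r / 2 / `|v|.
have c0 : 0 < c by rewrite !divr_gt0 // normr_gt0.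
have : h (c *: v) = k (c *: v).
  apply: hk; rewrite normrZ gtr0_norm // /c divfK ?normr_eq0 //.
  by rewrite ltr_pdivrMr // ltr_pMr // ltr1n.
rewrite !is_lin_scale // => /(congr1 (fun y => c^-1 *: y)).
by rewrite !scalerA mulVf ?gt_eqF // !scale1r.
Qed.

Lemma tangent_vector_of_curve {R : realType} {X : Type} {D : diffeology R X} {x : X}
    {p : pobj R X} : Gob D x p ->
  exists2 r : R, 0 < r & forall w : 'rV[R]_(odim p), `|w| < r ->
    exists q g, [/\ Gob D x q, is_curve q, Gmor q p setT g & tmap g (const_mx 1) = w].
Proof.
case=> plot_p open_U _ U0 p0.
have /nbhs_ballP [r r0 ballU] := open_U 0 U0; exists r => // w wr.
have gU : sinusoid w 1 0 @` setT `<=` odom p.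
  move=> _ [a _ <-]; apply: ballU.
  by rewrite -ball_normE /ball_ /= sub0r normrN (le_lt_trans (sinusoid_norm _ _)).
exists (@PObj R X 1 setT (oplot p \o sinusoid w 1 0)), (sinusoid w 1 0).
split=> //; last exact: tmap_sinusoid.
- split=> //=; first exact: plot_comp plot_p openT (sinusoid_smooth _ _ _ _) gU.
  + exact: openT.
  + exact: connected_rV1.
  + by rewrite sinusoid0.
- split; first exact: openT.
  do 3 split=> //; first exact: sinusoid_smooth.
  by do 2 split=> //; rewrite sinusoid0.
Qed.

Lemma cocones_agree_on_curves {R : realType} {X : Type} {D : diffeology R X} {x : X}
    {Cob : pobj R X -> Prop} {W : lmodType R}
    {alpha beta : forall p : pobj R X, 'rV[R]_(odim p) -> W} :
  local_generating_set D x Cob ->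
  cocone (Gob D x) (@Gmor R X) alpha -> cocone (Gob D x) (@Gmor R X) beta ->
  (forall q, Cob q -> alpha q =1 beta q) ->
  forall q, Gob D x q -> is_curve q -> alpha q =1 beta q.
Proof.
move=> [Cob_curves gen_Cob] cocone_alpha cocone_beta alpha_beta_C q Gq curve_q v.
have [q' [Wq [f [Cq' qq']]]] := gen_Cob q Gq curve_q.
have Gq' := (Cob_curves q' Cq').1.
by rewrite -(cocone_alpha.2 _ _ _ _ Gq Gq' qq') -(cocone_beta.2 _ _ _ _ Gq Gq' qq')
           alpha_beta_C.
Qed.

Theorem proposition3p3 (R : realType) (X : Type) (D : diffeology R X) (x : X)
    (Cob : pobj R X -> Prop)
    (Cmor : forall p q : pobj R X, set 'rV[R]_(odim p) ->
              ('rV[R]_(odim p) -> 'rV[R]_(odim q)) -> Prop) :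
  local_generating_category D x Cob Cmor ->
  forall (W : lmodType R) (alpha beta : forall p : pobj R X, 'rV[R]_(odim p) -> W),
    cocone (Gob D x) (@Gmor R X) alpha ->
    cocone (Gob D x) (@Gmor R X) beta ->
    (forall q, Cob q -> alpha q =1 beta q) ->
    forall p, Gob D x p -> alpha p =1 beta p.
Proof.
move=> [_ gen_Cob] W alpha beta cocone_alpha cocone_beta alpha_beta_C p Gp.
have [r r0 curves] := tangent_vector_of_curve Gp.
apply: (is_lin_eq_near0 (cocone_alpha.1 p Gp) (cocone_beta.1 p Gp) r0) => w /curves.
move=> [q [g [Gq curve_q qp <-]]].
rewrite (cocone_alpha.2 _ _ _ _ Gq Gp qp) (cocone_beta.2 _ _ _ _ Gq Gp qp).
exact: (cocones_agree_on_curves gen_Cob cocone_alpha cocone_beta alpha_beta_C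
          q Gq curve_q).
Qed.
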